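(* Let $X$ be a real Hilbert space, $C\subseteq X$ a closed convex set, $T:C\to C$ a nonexpansive map, $x_0\in C$, and let $p\in C$ be a fixed point of $T$. Let $N\in\mathbb{N}\setminus\{0\}$ satisfy $N\geq 2\|x_0-p\|$. Then for every $k\in\mathbb{N}$ and every monotone function $f:\mathbb{N}\to\mathbb{N}$ there exist $n\in\mathbb{N}$ with $n\leq f^{(r)}(0)$, where $r:=N^2(k+1)$, and $x\in C\cap B_N$ such that $$\|T(x)-x\|\leq \frac{1}{f(n)+1}$$ and $$\forall y\in C\cap B_N\ \left(\|T(y)-y\|\leq \frac{1}{n+1}\ \to\ \|x-x_0\|^2\leq \|y-x_0\|^2+\frac{1}{k+1}\right).$$
   Context: $B_N:=\{x\in X:\ \|x-p\|\leq N\}$ denotes the closed ball of radius $N$ centered at the fixed point $p$. A function $f:\mathbb{N}\to\mathbb{N}$ is called monotone if $f(n)\leq f(n+1)$ for all $n\in\mathbb{N}$. $f^{(r)}$ denotes the $r$-fold composition of $f$ with itself ($f^{(0)}$ is the identity). A map $T$ is nonexpansive if $\|T(x)-T(y)\|\leq\|x-y\|$ for all $x,y$. *)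

From Stdlib Require Import Reals Lra.
Open Scope R_scope.

Record HilbertSpace := {
  hcar :> Type;
  hzero : hcar;
  hadd : hcar -> hcar -> hcar;
  hopp : hcar -> hcar;
  hscal : R -> hcar -> hcar;
  hinner : hcar -> hcar -> R;
  hadd_assoc : forall x y z, hadd x (hadd y z) = hadd (hadd x y) z;
  hadd_comm : forall x y, hadd x y = hadd y x;
  hadd_zero : forall x, hadd x hzero = x;
  hadd_opp : forall x, hadd x (hopp x) = hzero;
  hscal_one : forall x, hscal 1 x = x;
  hscal_assoc : forall a b x, hscal a (hscal b x) = hscal (a * b) x;
  hscal_distr_l : forall a x y, hscal a (hadd x y) = hadd (hscal a x) (hscal a y);
  hscal_distr_r : forall a b x, hscal (a + b) x = hadd (hscal a x) (hscal b x);
  hinner_sym : forall x y, hinner x y = hinner y x;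
  hinner_add_l : forall x y z, hinner (hadd x y) z = hinner x z + hinner y z;
  hinner_scal_l : forall a x y, hinner (hscal a x) y = a * hinner x y;
  hinner_pos : forall x, 0 <= hinner x x;
  hinner_def : forall x, hinner x x = 0 -> x = hzero;
  hcomplete : forall u : nat -> hcar,
    (forall eps, eps > 0 -> exists M, forall m n, (m >= M)%nat -> (n >= M)%nat ->
       sqrt (hinner (hadd (u m) (hopp (u n))) (hadd (u m) (hopp (u n)))) < eps) ->
    exists l, forall eps, eps > 0 -> exists M, forall n, (n >= M)%nat ->
       sqrt (hinner (hadd (u n) (hopp l)) (hadd (u n) (hopp l))) < eps
}.

Arguments hzero {h}.
Arguments hadd {h}.
Arguments hopp {h}.
Arguments hscal {h}.
Arguments hinner {h}.

Definition hsub {X : HilbertSpace} (x y : X) : X := hadd x (hopp y).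
Definition hnorm {X : HilbertSpace} (x : X) : R := sqrt (hinner x x).

Definition hconverges {X : HilbertSpace} (u : nat -> X) (l : X) : Prop :=
  forall eps, eps > 0 -> exists M, forall n, (n >= M)%nat -> hnorm (hsub (u n) l) < eps.

(* C is (sequentially, equivalently topologically in a metric space) closed *)
Definition is_closed {X : HilbertSpace} (C : X -> Prop) : Prop :=
  forall (u : nat -> X) (l : X), (forall n, C (u n)) -> hconverges u l -> C l.

Definition is_convex {X : HilbertSpace} (C : X -> Prop) : Prop :=
  forall x y t, C x -> C y -> 0 <= t <= 1 -> C (hadd (hscal t x) (hscal (1 - t) y)).

Definition maps_into {X : HilbertSpace} (C : X -> Prop) (T : X -> X) : Prop :=
  forall x, C x -> C (T x).

Definition nonexpansive_on {X : HilbertSpace} (C : X -> Prop) (T : X -> X) : Prop :=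
  forall x y, C x -> C y -> hnorm (hsub (T x) (T y)) <= hnorm (hsub x y).

Definition ball {X : HilbertSpace} (p : X) (N : R) (x : X) : Prop :=
  hnorm (hsub x p) <= N.

Definition monotone (f : nat -> nat) : Prop := forall n, (f n <= f (S n))%nat.

Definition iter_fun (f : nat -> nat) (r : nat) : nat -> nat := Nat.iter r f.

(* Let phi x := ||x - x0||^2. If the conclusion failed, every approximate
   fixed point x of the required precision would admit another one y, of the
   precision demanded at the previous stage, with phi y < phi x - 1/(k+1).
   Starting from the exact fixed point p and walking backwards along the
   iterates f^(r)(0) >= ... >= f(0) >= 0, after r = N^2 (k+1) steps one
   reaches a point with phi < ||p - x0||^2 - N^2 <= N^2/4 - N^2 < 0. *)
From Stdlib Require Import Reals Lra Lia Classical.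
Open Scope R_scope.

Lemma monotone_le (f : nat -> nat) :
  monotone f -> forall a b, (a <= b)%nat -> (f a <= f b)%nat.
Proof.
  intros Hf a b Hab. induction Hab as [|b _ IH]; [lia|].
  specialize (Hf b). lia.
Qed.

Lemma iter_fun_zero_le (f : nat -> nat) :
  monotone f -> forall i j, (i <= j)%nat -> (iter_fun f i 0 <= iter_fun f j 0)%nat.
Proof.
  intros Hf.
  assert (Hstep : forall i, (iter_fun f i 0 <= iter_fun f (S i) 0)%nat).
  { induction i as [|i IH]; [simpl; lia|].
    unfold iter_fun in *; simpl. apply monotone_le; assumption. }
  intros i j Hij. induction Hij as [|j _ IH]; [lia|].
  specialize (Hstep j). lia.
Qed.

Section Metastability.

Variables (A : Type) (P : A -> Prop) (Q : nat -> A -> Prop) (phi : A -> R) (d : R).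

Definition nearly_minimal (n : nat) (x : A) : Prop :=
  forall y, P y -> Q n y -> phi x <= phi y + d.

Lemma descent_chain (f : nat -> nat) (r : nat) (a : A) :
  monotone f -> P a -> (forall n, Q n a) ->
  (forall n x, (n <= iter_fun f r 0)%nat -> P x -> Q (f n) x -> ~ nearly_minimal n x) ->
  forall j, (j <= r)%nat ->
    exists y, P y /\ Q (iter_fun f (r - j) 0) y /\ phi y <= phi a - INR j * d.
Proof.
  intros Hf Pa Qa Hnot.
  induction j as [|j IH]; intros Hj.
  - exists a. repeat split; auto. simpl. lra.
  - destruct IH as (x & Px & Qx & phix); [lia|].
    replace (r - j)%nat with (S (r - S j)) in Qx by lia.
    set (n := iter_fun f (r - S j) 0) in *.
    assert (Hn : (n <= iter_fun f r 0)%nat) by (apply iter_fun_zero_le; [assumption | lia]).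
    assert (Hfar : exists y, P y /\ Q n y /\ phi y + d < phi x).
    { apply NNPP. intros Hno. apply (Hnot n x Hn Px Qx). intros y Py Qy.
      apply Rnot_lt_le. intros Hlt. apply Hno. exists y. auto. }
    destruct Hfar as (y & Py & Qy & phiy).
    exists y. repeat split; auto. rewrite S_INR. lra.
Qed.

Lemma metastable_nearly_minimal (f : nat -> nat) (r : nat) (a : A) :
  monotone f -> P a -> (forall n, Q n a) ->
  (forall x, P x -> 0 <= phi x) -> phi a < INR r * d ->
  exists n x, (n <= iter_fun f r 0)%nat /\ P x /\ Q (f n) x /\ nearly_minimal n x.
Proof.
  intros Hf Pa Qa phi_nonneg Hr.
  apply NNPP. intros Hno.
  assert (Hnot : forall n x, (n <= iter_fun f r 0)%nat -> P x -> Q (f n) x ->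
                   ~ nearly_minimal n x).
  { intros n x Hn Px Qx Hmin. apply Hno. exists n, x. auto. }
  destruct (descent_chain f r a Hf Pa Qa Hnot r (le_n r)) as (y & Py & _ & phiy).
  specialize (phi_nonneg y Py). lra.
Qed.

End Metastability.

Lemma hinner_zero_l {X : HilbertSpace} (w : X) : hinner hzero w = 0.
Proof.
  pose proof (hinner_add_l X hzero hzero w) as H.
  rewrite hadd_zero in H. lra.
Qed.

(* [hsub a b] and [hsub b a] add up to zero, so bilinearity gives equal squares. *)
Lemma hnorm_sub_sym {X : HilbertSpace} (a b : X) : hnorm (hsub a b) = hnorm (hsub b a).
Proof.
  unfold hnorm. set (v := hsub b a). set (w := hsub a b).
  assert (Hvw : hadd v w = hzero).
  { unfold v, w, hsub.
    rewrite hadd_assoc, <- (hadd_assoc X b (hopp a) a).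
    rewrite (hadd_comm X (hopp a) a), hadd_opp, hadd_zero, hadd_opp. reflexivity. }
  pose proof (hinner_add_l X v w w) as Hw. rewrite Hvw, hinner_zero_l in Hw.
  pose proof (hinner_add_l X v w v) as Hv. rewrite Hvw, hinner_zero_l in Hv.
  rewrite (hinner_sym X w v) in Hv.
  f_equal. lra.
Qed.

Lemma hnorm_sub_diag {X : HilbertSpace} (a : X) : hnorm (hsub a a) = 0.
Proof. unfold hnorm, hsub. rewrite hadd_opp, hinner_zero_l. apply sqrt_0. Qed.

Lemma square_lt_of_double_le (t N : R) :
  1 <= N -> 0 <= t -> N >= 2 * t -> t ^ 2 < N * N.
Proof. intros. nra. Qed.

Theorem mainTheorem1 (X : HilbertSpace) (C : X -> Prop) (T : X -> X) (x0 p : X)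
  (N : nat)
  (hC_closed : is_closed C) (hC_convex : is_convex C)
  (hT_maps : maps_into C T) (hT_ne : nonexpansive_on C T)
  (hx0 : C x0) (hp : C p) (hfix : T p = p)
  (hN0 : (N <> 0)%nat) (hN : INR N >= 2 * hnorm (hsub x0 p)) :
  forall (k : nat) (f : nat -> nat), monotone f ->
    exists (n : nat) (x : X),
      (n <= iter_fun f (N * N * (k + 1)) 0)%nat /\
      C x /\ ball p (INR N) x /\
      hnorm (hsub (T x) x) <= 1 / (INR (f n) + 1) /\
      (forall y : X, C y -> ball p (INR N) y ->
         hnorm (hsub (T y) y) <= 1 / (INR n + 1) ->
         (hnorm (hsub x x0))^2 <= (hnorm (hsub y x0))^2 + 1 / (INR k + 1)).
Proof.
  intros k f Hf.
  set (P := fun x => C x /\ ball p (INR N) x).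
  set (Q := fun n x => hnorm (hsub (T x) x) <= 1 / (INR n + 1)).
  set (phi := fun x => hnorm (hsub x x0) ^ 2).
  assert (Qp : forall n, Q n p).
  { intros n. unfold Q. rewrite hfix, hnorm_sub_diag.
    pose proof (pos_INR n). apply Rlt_le, Rdiv_lt_0_compat; lra. }
  assert (Pp : P p).
  { split; [assumption|]. unfold ball. rewrite hnorm_sub_diag. apply pos_INR. }
  assert (phi_p : phi p < INR (N * N * (k + 1)) * (1 / (INR k + 1))).
  { unfold phi. rewrite hnorm_sub_sym, !mult_INR, plus_INR.
    replace (INR N * INR N * (INR k + INR 1) * (1 / (INR k + 1))) with (INR N * INR N)
      by (simpl; field; pose proof (pos_INR k); lra).
    apply square_lt_of_double_le; [apply (le_INR 1); lia | apply sqrt_pos | assumption]. }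
  destruct (metastable_nearly_minimal X P Q phi (1 / (INR k + 1)) f _ p Hf Pp Qp
              (fun x _ => pow2_ge_0 _) phi_p) as (n & x & Hn & [Cx Bx] & Qx & Hmin).
  exists n, x. repeat split; auto.
  intros y Cy By Qy. exact (Hmin y (conj Cy By) Qy).
Qed.
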